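(* Let $\beta=(\pi_\ell)_{\ell=1}^L$ be a chainable architecture. The redundancy removal procedure applied to $\beta$ stops after finitely many iterations and returns an architecture $\beta'$ such that: (1) $\beta'$ is chainable and non-redundant, and either $\beta'=(\pi_1*\cdots*\pi_L)$ or $\beta'=(\pi_1*\cdots*\pi_{\ell_1},\ \pi_{\ell_1+1}*\cdots*\pi_{\ell_2},\ \dots,\ \pi_{\ell_p+1}*\cdots*\pi_L)$ for some indices $1\le\ell_1<\cdots<\ell_p<L$ with $p\in\{1,\dots,L-1\}$; (2) $\mathcal{B}^{\beta'}=\mathcal{B}^\beta$; (3) $\|\beta'\|_0\le\|\beta\|_0$.
   Context: A pattern is a tuple $\pi=(a,b,c,d)$ of positive integers; $\mathbf{S}_\pi:=\mathbf{I}_a\otimes\mathbf{1}_{b\times c}\otimes\mathbf{I}_d\in\{0,1\}^{abd\times acd}$. A $\pi$-factor is a complex $abd\times acd$ matrix with support contained in that of $\mathbf{S}_\pi$. Patterns $\pi_1=(a_1,b_1,c_1,d_1),\pi_2=(a_2,b_2,c_2,d_2)$ are chainable if $a_1c_1/a_2=b_2d_2/d_1=:r(\pi_1,\pi_2)$ is an integer, $a_1\mid a_2$, $d_2\mid d_1$; then $\pi_1*\pi_2:=(a_1,b_1d_1/d_2,a_2c_2/a_1,d_2)$. A chainable pair is redundant if $r(\pi_1,\pi_2)\ge\min(b_1,c_2)$. An architecture $\beta=(\pi_\ell)_{\ell=1}^L$ is a sequence of patterns with $a_\ell c_\ell d_\ell=a_{\ell+1}b_{\ell+1}d_{\ell+1}$;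 it is chainable if every consecutive pair is chainable (depth $1$: chainable by convention), and a chainable architecture is redundant if some consecutive pair $(\pi_\ell,\pi_{\ell+1})$ is redundant (depth $1$: non-redundant). $\pi_p*\cdots*\pi_q$ is the iterated product. $\mathcal{B}^\beta:=\{\mathbf{X}_1\cdots\mathbf{X}_L:\mathbf{X}_\ell\text{ a }\pi_\ell\text{-factor}\}$ and $\|\beta\|_0:=\sum_{\ell}a_\ell b_\ell c_\ell d_\ell$. The redundancy removal procedure: set $\beta'\leftarrow\beta$; while $\beta'=(\pi'_\ell)_{\ell=1}^{L'}$ is redundant, choose any $\ell$ such that $(\pi'_\ell,\pi'_{\ell+1})$ is redundant and replace $\beta'$ by $(\pi'_1,\dots,\pi'_{\ell-1},\pi'_\ell*\pi'_{\ell+1},\pi'_{\ell+2},\dots,\pi'_{L'})$; return $\beta'$. *)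

From HB Require Import structures.
From mathcomp Require Import all_boot all_order all_algebra.
From mathcomp Require Import reals.
From mathcomp Require Import complex.
Set Implicit Arguments. Unset Strict Implicit. Unset Printing Implicit Defensive.
Import Order.TTheory GRing.Theory Num.Theory.

Record pattern := Pat { pa : nat; pb : nat; pc : nat; pd : nat }.

Definition pattern_pos (p : pattern) : bool :=
  [&& 0 < pa p, 0 < pb p, 0 < pc p & 0 < pd p].

Definition prows (p : pattern) : nat := pa p * pb p * pd p.
Definition pcols (p : pattern) : nat := pa p * pc p * pd p.

(* Chainability of (p1,p2): a1 c1 / a2 = b2 d2 / d1 is an integer r, a1 | a2, d2 | d1. *)
Definition chainable_pair (p1 p2 : pattern) : bool :=
  [&& pa p2 %| pa p1 * pc p1,
      (pa p1 * pc p1 %/ pa p2) * pd p1 == pb p2 * pd p2,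
      pa p1 %| pa p2 & pd p2 %| pd p1].

Definition rpair (p1 p2 : pattern) : nat := pa p1 * pc p1 %/ pa p2.

Definition pstar (p1 p2 : pattern) : pattern :=
  Pat (pa p1) (pb p1 * pd p1 %/ pd p2) (pa p2 * pc p2 %/ pa p1) (pd p2).

Definition redundant_pair (p1 p2 : pattern) : bool :=
  chainable_pair p1 p2 && (minn (pb p1) (pc p2) <= rpair p1 p2).

Definition consec (T : Type) (R : rel T) (s : seq T) : bool :=
  if s is x :: s' then path R x s' else true.

Definition architecture (beta : seq pattern) : bool :=
  [&& size beta > 0, all pattern_pos beta &
      consec (fun p q => pcols p == prows q) beta].

Definition chainable (beta : seq pattern) : bool := consec chainable_pair beta.

Definition dflt_pattern : pattern := Pat 1 1 1 1.

(* A chainable architecture is redundant if some consecutive pair is redundant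
   (depth 1: never redundant). Indices l are 0-based here. *)
Definition redundant (beta : seq pattern) : bool :=
  chainable beta &&
  has (fun l => redundant_pair (nth dflt_pattern beta l) (nth dflt_pattern beta l.+1))
      (iota 0 (size beta).-1).

Definition iprod (s : seq pattern) : pattern :=
  foldl pstar (head dflt_pattern s) (behead s).

Definition merge_at (beta : seq pattern) (l : nat) : seq pattern :=
  take l beta ++ pstar (nth dflt_pattern beta l) (nth dflt_pattern beta l.+1)
       :: drop l.+2 beta.

Definition rr_step (beta beta' : seq pattern) : Prop :=
  redundant beta /\
  exists l, l.+1 < size beta /\
    redundant_pair (nth dflt_pattern beta l) (nth dflt_pattern beta l.+1) /\
    beta' = merge_at beta l.

Inductive rr_reach (beta : seq pattern) : seq pattern -> Prop :=
| rr_refl : rr_reach beta beta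
| rr_next b1 b2 : rr_reach beta b1 -> rr_step b1 b2 -> rr_reach beta b2.

Definition norm0 (beta : seq pattern) : nat :=
  \sum_(p <- beta) (pa p * pb p * pc p * pd p).

Section Mat.
Variable R : realType.
Local Open Scope ring_scope.
Definition C := R[i].

Definition mat := nat -> nat -> C.

(* Support of S_pi = I_a (x) 1_{b x c} (x) I_d: row i = (i1 b + i2) d + i3,
   column j = (j1 c + j2) d + j3; the entry is 1 iff i1 = j1 and i3 = j3. *)
Definition in_support (p : pattern) (i j : nat) : bool :=
  [&& i < prows p, j < pcols p,
      i %/ (pb p * pd p) == j %/ (pc p * pd p) & i %% pd p == j %% pd p]%N.

Definition factor (p : pattern) (X : mat) : Prop :=
  forall i j, X i j != 0 -> in_support p i j.

Definition mulm (k : nat) (A B : mat) : mat :=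
  fun i j => \sum_(t < k) A i t * B t j.

Fixpoint prodm (s : seq (pattern * mat)) : mat :=
  match s with
  | [::] => fun _ _ => 0
  | [:: (_, X)] => X
  | (p, X) :: s' => mulm (pcols p) X (prodm s')
  end.

Definition Bset (beta : seq pattern) (M : mat) : Prop :=
  exists Xs : seq mat,
    [/\ size Xs = size beta,
        (forall l, (l < size beta)%N ->
           factor (nth dflt_pattern beta l) (nth (fun _ _ => 0) Xs l)) &
        M = prodm (zip beta Xs)].
End Mat.

From mathcomp Require Import all_boot all_order all_algebra.
From mathcomp Require Import reals complex.
From mathcomp Require Import zify boolp.
Set Implicit Arguments. Unset Strict Implicit. Unset Printing Implicit Defensive.
Import GRing.Theory.

(* Write r = r(p, q) for a chainable pair p = (a, b1, c1, d1), q = (a2, b2, c2, d2).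
   Chainability means p = (a, b1, s r, t d2), q = (a s, r t, c2, d2) for some s, t,
   and then p * q = (a, b1 t, s c2, d2).  With this parametrisation,
   ||p * q||_0 <= ||p||_0 + ||q||_0 reduces to b1 c2 <= r (b1 + c2), which holds
   when r >= min(b1, c2).  Products of a p-factor and a q-factor are always
   (p * q)-factors.  Conversely, if r >= b1, a (p * q)-factor Z is X Y where X
   sends the b1 row blocks of Z to b1 of the r middle blocks and Y carries the
   entries of Z; the case r >= c2 is symmetric.  Hence merging a redundant pair
   leaves B^beta unchanged and does not increase ||.||_0.  The star product is
   associative under the divisibility conditions of chainability, so every
   intermediate architecture is the list of products of consecutive blocks of
   beta.  Each step shortens the architecture, so the procedure terminates. *)

Lemma divnMAC m n p : m %/ (n * p) = m %/ p %/ n.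
Proof. by rewrite mulnC divnMA. Qed.

Lemma ltn_mixed_radix x y m n : x < m -> y < n -> x * n + y < m * n.
Proof.
move=> ltxm ltyn; apply: leq_trans (leq_mul ltxm (leqnn n)).
by rewrite mulSn addnC ltn_add2r.
Qed.

Lemma modn_modMl m n d : m %% (n * d) %% d = m %% d.
Proof. exact/modn_dvdm/dvdn_mull. Qed.

Definition pattern_dvd (p q : pattern) : bool := (pa p %| pa q) && (pd q %| pd p).

Lemma chainable_pair_dvd p q : chainable_pair p q -> pattern_dvd p q.
Proof. by case/and4P=> _ _ h1 h2; apply/andP. Qed.

Lemma pa_foldl_pstar x s : pa (foldl pstar x s) = pa x.
Proof. by elim: s x => //= y s IH x; rewrite IH. Qed.

Lemma pd_foldl_pstar x s : pd (foldl pstar x s) = pd (last x s).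
Proof. by elim: s x => //= y s IH x; rewrite IH; case: s {IH}. Qed.

Lemma pstarA x y z : pd y %| pd x -> pa y %| pa z ->
  pstar (pstar x y) z = pstar x (pstar y z).
Proof.
move=> yx yz; rewrite /pstar /=.
by rewrite (divnK (dvdn_mull _ yx)) [pa y * _]mulnC (divnK (dvdn_mulr _ yz)).
Qed.

Lemma foldl_pstar_cons s y x : sorted pattern_dvd (y :: s) -> pd y %| pd x ->
  foldl pstar x (y :: s) = pstar x (foldl pstar y s).
Proof.
elim: s y x => //= z s IH y x /andP[/andP[yz1 yz2] zs] yx.
by rewrite (IH z (pstar x y)) // (IH z y) // pstarA // pa_foldl_pstar.
Qed.

Lemma iprod_cat s1 s2 : 0 < size s1 -> 0 < size s2 -> sorted pattern_dvd (s1 ++ s2) ->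
  iprod (s1 ++ s2) = pstar (iprod s1) (iprod s2).
Proof.
case: s1 => // x s1 _; case: s2 => // y s2 _.
rewrite /iprod /= foldl_cat cat_path => /andP[_ /= /andP[/andP[_ yx] ys2]].
by apply: foldl_pstar_cons; rewrite ?pd_foldl_pstar.
Qed.

Lemma pcols_pstar p q : chainable_pair p q -> pcols (pstar p q) = pcols q.
Proof.
case/and4P=> _ _ pq _; rewrite /pcols /= [pa p * _]mulnC.
by rewrite (divnK (dvdn_mulr _ pq)).
Qed.

Lemma chainable_pair_pstarr o p q : chainable_pair p q -> chainable_pair o p ->
  chainable_pair o (pstar p q).
Proof.
case/and4P=> _ _ _ pq /and4P[op1 /eqP op2 op3 op4]; apply/and4P; split => //=.
  by rewrite op2 (divnK (dvdn_mull _ pq)).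
exact: dvdn_trans pq op4.
Qed.

Lemma chainable_pair_pstarl p q w : chainable_pair p q -> chainable_pair q w ->
  chainable_pair (pstar p q) w.
Proof.
case/and4P=> _ _ pq _ /and4P[qw1 /eqP qw2 qw3 qw4]; apply/and4P; split => //=.
- by rewrite [pa p * _]mulnC (divnK (dvdn_mulr _ pq)).
- by rewrite [pa p * _]mulnC (divnK (dvdn_mulr _ pq)) qw2.
exact: dvdn_trans pq qw3.
Qed.

Lemma chainable_pair_decomp p q :
  pattern_pos p -> pattern_pos q -> chainable_pair p q ->
  exists a b s r t c d, [/\ p = Pat a b (s * r) (t * d), q = Pat (a * s) (r * t) c d,
                            rpair p q = r & pstar p q = Pat a (b * t) (s * c) d].
Proof.
case: p => a b c1 d1; case: q => a2 b2 c d.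
rewrite /pattern_pos /chainable_pair /rpair /pstar /=.
case/and4P=> a_gt0 _ _ _ /and4P[_ _ _ d_gt0].
case/and4P=> /divnK ac1 /eqP b2d /dvdnP[s a2E] /dvdnP[t d1E]; subst a2 d1.
set r := a * c1 %/ (s * a) in ac1 b2d *.
exists a, b, s, r, t, c, d.
have -> : c1 = s * r by apply/eqP; rewrite -(eqn_pmul2l a_gt0) -ac1; apply/eqP; lia.
have -> : b2 = r * t by apply/eqP; rewrite -(eqn_pmul2r d_gt0) -b2d; apply/eqP; lia.
split => //; first by rewrite mulnC.
by rewrite mulnA mulnK // mulnAC mulnK.
Qed.

Definition pweight (p : pattern) : nat := pa p * pb p * pc p * pd p.

Lemma pweight_pstar p q : pattern_pos p -> pattern_pos q -> redundant_pair p q ->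
  pweight (pstar p q) <= pweight p + pweight q.
Proof.
move=> pp pq /andP[/(chainable_pair_decomp pp pq)].
case=> [a [b [s [r [t [c [d [-> -> -> ->]]]]]]]].
rewrite /pweight /= geq_min => /orP[] le_r.
  have := leq_mul (leqnn (a * s * t * d)) (leq_mul le_r (leqnn c)); lia.
have := leq_mul (leqnn (a * s * t * d)) (leq_mul (leqnn b) le_r); lia.
Qed.

Lemma pattern_pos_pstar p q : pattern_pos p -> pattern_pos q -> chainable_pair p q ->
  pattern_pos (pstar p q).
Proof.
move=> pp pq /(chainable_pair_decomp pp pq)[a [b [s [r [t [c [d [ep eq _ ->]]]]]]]].
move: pp pq; rewrite ep eq /pattern_pos /= !muln_gt0.
by case/and4P=> -> -> /andP[-> _] /andP[-> _] /and4P[_ _ -> ->].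
Qed.

Section Factorization.
Variable R : realType.
Variables a b s r t d c : nat.
Hypotheses (b_gt0 : 0 < b) (c_gt0 : 0 < c) (t_gt0 : 0 < t) (d_gt0 : 0 < d).
Local Notation P := (Pat a b (s * r) (t * d)).
Local Notation Q := (Pat (a * s) (r * t) c d).
Local Notation PQ := (Pat a (b * t) (s * c) d).
(* A column k of P, which is a row of Q, has the mixed-radix digits
   (k1, k2, mid k, k4) with radices (a, s, r, t d). *)
Local Notation mid k := (k %/ (t * d) %% r).

Lemma in_support_left i k : in_support P i k =
  [&& i < prows P, k < pcols P,
      i %/ (t * d) %/ b == k %/ (t * d) %/ r %/ s & i %% (t * d) == k %% (t * d)].
Proof. by rewrite /in_support /= (divnMAC i) (divnMAC k) (divnMAC _ s). Qed.

Lemma in_support_right k j : in_support Q k j =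
  [&& k < prows Q, j < pcols Q,
      k %/ (t * d) %/ r == j %/ d %/ c & k %% d == j %% d].
Proof. by rewrite /in_support /= -(mulnA r) (divnMAC k) (divnMAC j). Qed.

Lemma in_support_merged i j : in_support PQ i j =
  [&& i < prows PQ, j < pcols PQ,
      i %/ (t * d) %/ b == j %/ d %/ c %/ s & i %% d == j %% d].
Proof.
by rewrite /in_support /= -(mulnA b) -(mulnA s) (divnMAC i) (divnMAC j) (divnMAC j c).
Qed.

Lemma in_support_through i k j :
  in_support P i k -> in_support Q k j -> in_support PQ i j.
Proof.
rewrite in_support_left in_support_right in_support_merged.
case/and4P=> i_lt _ /eqP eik /eqP eik' /and4P[_ j_lt /eqP ekj /eqP ekj'].
apply/and4P; split.
- by move: i_lt; rewrite /prows /= !mulnA.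
- by move: j_lt; rewrite /pcols /= !mulnA.
- by rewrite eik ekj.
- by rewrite -(modn_modMl i t) eik' modn_modMl ekj'.
Qed.

Lemma route_unique i j g : in_support PQ i j -> g < r ->
  exists2 k0, k0 < pcols P &
    forall k, [&& in_support P i k, in_support Q k j & mid k == g] = (k == k0).
Proof.
rewrite in_support_merged => /and4P[i_lt j_lt /eqP eij /eqP eij'] g_lt.
have td_gt0 : 0 < t * d by rewrite muln_gt0 t_gt0 d_gt0.
have r_gt0 : 0 < r by apply: leq_ltn_trans g_lt.
set J := j %/ d %/ c.
have J_lt : J < a * s.
  by rewrite !ltn_divLR //; move: j_lt; rewrite /pcols /= !mulnA.
set k0 := (J * r + g) * (t * d) + i %% (t * d).
have k0_div : k0 %/ (t * d) = J * r + g.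
  by rewrite divnMDl // divn_small ?addn0 // ltn_pmod.
have k0_mod : k0 %% (t * d) = i %% (t * d) by rewrite modnMDl modn_mod.
have k0_mid : mid k0 = g by rewrite k0_div modnMDl modn_small.
have k0_hi : k0 %/ (t * d) %/ r = J by rewrite k0_div divnMDl // divn_small ?addn0.
have k0_lt : k0 < a * s * r * (t * d).
  by apply: ltn_mixed_radix (ltn_pmod _ td_gt0); apply: ltn_mixed_radix.
exists k0; first by rewrite /pcols /= (mulnA a).
move=> k; rewrite in_support_left in_support_right.
apply/idP/eqP => [|->].
  case/and3P=> /and4P[_ _ _ /eqP eik] /and4P[_ _ /eqP ekj _] /eqP ek.
  by rewrite (divn_eq k (t * d)) (divn_eq (k %/ (t * d)) r) ekj ek -eik.
have k0_modd : k0 %% d = j %% d by rewrite -(modn_modMl k0 t) k0_mod modn_modMl.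
rewrite k0_mid k0_hi k0_mod k0_modd -eij /J !eqxx !andbT /prows /pcols /= !mulnA.
by move: i_lt j_lt k0_lt; rewrite /prows /pcols /= !mulnA => -> -> ->.
Qed.

Lemma row_of_mid i k : in_support P i k -> mid k = i %/ (t * d) %% b ->
  (k %/ (t * d) %/ r %/ s * b + mid k) * (t * d) + k %% (t * d) = i.
Proof.
rewrite in_support_left => /and4P[_ _ /eqP eik /eqP eik'] ->.
by rewrite -eik -eik' -!divn_eq.
Qed.

Lemma col_of_mid k j : in_support Q k j -> mid k = j %/ d %% c ->
  (k %/ (t * d) %/ r * c + mid k) * d + k %% d = j.
Proof.
rewrite in_support_right => /and4P[_ _ /eqP ekj /eqP ekj'] ->.
by rewrite ekj ekj' -!divn_eq.
Qed.

Local Open Scope ring_scope.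

Lemma factor_mulm (X Y : mat R) :
  factor P X -> factor Q Y -> factor PQ (mulm (pcols P) X Y).
Proof.
move=> PX QY i j; apply: contraNT => Nij; apply/eqP/big1 => k _.
apply/eqP; rewrite mulf_eq0; apply: contraNT Nij => /norP[/PX ik /QY kj].
exact: in_support_through ik kj.
Qed.

Lemma mulm_route (X Y Z : mat R) (g : nat -> nat -> nat) :
  factor PQ Z -> (forall i j, in_support PQ i j -> (g i j < r)%N) ->
  (forall i j k, X i k * Y k j =
     if [&& in_support P i k, in_support Q k j & mid k == g i j] then Z i j else 0) ->
  Z = mulm (pcols P) X Y.
Proof.
move=> PQZ g_lt XY; apply/funext => i; apply/funext => j; rewrite /mulm.
under eq_bigr do rewrite XY.
have [-> | /PQZ ij] := eqVneq (Z i j) 0; first by rewrite big1 // => k _; case: ifP.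
have [k0 k0_lt k0_uniq] := route_unique ij (g_lt i j ij).
by rewrite -big_mkcond (big_pred1 (Ordinal k0_lt)).
Qed.

Lemma factor_route_rows (Z : mat R) : (b <= r)%N -> factor PQ Z ->
  exists X Y, [/\ factor P X, factor Q Y & Z = mulm (pcols P) X Y].
Proof.
move=> b_le_r PQZ.
pose X : mat R := fun i k =>
  if in_support P i k && (mid k == i %/ (t * d) %% b)%N then 1 else 0.
pose Y : mat R := fun k j =>
  if in_support Q k j && (mid k < b)%N
  then Z ((k %/ (t * d) %/ r %/ s * b + mid k) * (t * d) + k %% (t * d))%N j else 0.
exists X, Y; split.
- by move=> i k; rewrite /X; case: ifP => [/andP[]|]; rewrite ?eqxx.
- by move=> k j; rewrite /Y; case: ifP => [/andP[]|]; rewrite ?eqxx.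
apply: (mulm_route (g := fun i _ => i %/ (t * d) %% b)%N) => // [i j _|i j k].
  exact: leq_trans (ltn_pmod _ b_gt0) b_le_r.
rewrite /X /Y.
case: (boolP (in_support P i k)) => [ik|_] /=; last by rewrite mul0r.
case: eqP => [e|_]; last by rewrite mul0r andbF.
by rewrite mul1r (row_of_mid ik e) e ltn_pmod // andbT.
Qed.

Lemma factor_route_cols (Z : mat R) : (c <= r)%N -> factor PQ Z ->
  exists X Y, [/\ factor P X, factor Q Y & Z = mulm (pcols P) X Y].
Proof.
move=> c_le_r PQZ.
pose X : mat R := fun i k =>
  if in_support P i k && (mid k < c)%N
  then Z i ((k %/ (t * d) %/ r * c + mid k) * d + k %% d)%N else 0.
pose Y : mat R := fun k j =>
  if in_support Q k j && (mid k == j %/ d %% c)%N then 1 else 0.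
exists X, Y; split.
- by move=> i k; rewrite /X; case: ifP => [/andP[]|]; rewrite ?eqxx.
- by move=> k j; rewrite /Y; case: ifP => [/andP[]|]; rewrite ?eqxx.
apply: (mulm_route (g := fun _ j => j %/ d %% c)%N) => // [i j _|i j k].
  exact: leq_trans (ltn_pmod _ c_gt0) c_le_r.
rewrite /X /Y.
case: (boolP (in_support Q k j)) => [kj|_] /=; last by rewrite mulr0 andbF.
case: eqP => [e|_]; last by rewrite mulr0 !andbF.
by rewrite mulr1 (col_of_mid kj e) e ltn_pmod // andbT.
Qed.

End Factorization.

Lemma factor_pstar (R : realType) p q (X Y : mat R) :
  pattern_pos p -> pattern_pos q -> chainable_pair p q ->
  factor p X -> factor q Y -> factor (pstar p q) (mulm (pcols p) X Y).
Proof.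
move=> pp pq /(chainable_pair_decomp pp pq)[a [b [s [r [t [c [d [-> -> _ ->]]]]]]]].
exact: factor_mulm.
Qed.

Lemma factor_pstar_decomp (R : realType) p q (Z : mat R) :
  pattern_pos p -> pattern_pos q -> redundant_pair p q -> factor (pstar p q) Z ->
  exists X Y, [/\ factor p X, factor q Y & Z = mulm (pcols p) X Y].
Proof.
move=> pp pq /andP[pq_ch min_le_r].
have [a [b [s [r [t [c [d [ep eq er ->]]]]]]]] := chainable_pair_decomp pp pq pq_ch.
move: pp pq min_le_r; rewrite er ep eq /pattern_pos /= !muln_gt0 /= geq_min.
case/and4P=> _ b_gt0 _ /andP[t_gt0 _] /and4P[_ _ c_gt0 d_gt0] /orP[].
  exact: factor_route_rows.
exact: factor_route_cols.
Qed.

Lemma map_eq_cat_cons (T U : Type) (f : T -> U) s L x Rs :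
  map f s = L ++ x :: Rs ->
  exists s1 y s2, [/\ s = s1 ++ y :: s2, map f s1 = L, f y = x & map f s2 = Rs].
Proof.
elim: L s => [|z L IH] [|y s] //= [ey es]; first by exists [::], y, s.
have [s1 [w [s2 [-> e1 ew e2]]]] := IH s es.
by exists (y :: s1), w, s2; rewrite /= ey e1.
Qed.

Lemma path_merge (T : Type) (e : rel T) x y z h L Rs :
  (forall w, e w x -> e w z) -> (forall w, e y w -> e z w) ->
  path e h (L ++ x :: y :: Rs) -> path e h (L ++ z :: Rs).
Proof.
move=> ewz ezw; elim: L h => [|w L IH] h /=; last by case/andP=> -> /IH.
by case/and3P=> /ewz -> _; case: Rs => [|w Rs] //= /andP[/ezw -> ->].
Qed.

Lemma sorted_merge_pair (T : Type) (e : rel T) x y z L Rs :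
  (forall w, e w x -> e w z) -> (forall w, e y w -> e z w) ->
  sorted e (L ++ x :: y :: Rs) -> sorted e (L ++ z :: Rs).
Proof.
move=> ewz ezw; case: L => [|h L] /=; last exact: path_merge.
by case/andP=> _; case: Rs => [|w Rs] //= /andP[/ezw -> ->].
Qed.

Section Products.
Variable R : realType.
Local Open Scope ring_scope.
Implicit Types (X Y Z M : mat R) (s : seq (pattern * mat R)).

Lemma mulmA k1 k2 X Y Z : mulm k2 (mulm k1 X Y) Z = mulm k1 X (mulm k2 Y Z).
Proof.
apply/funext => i; apply/funext => j; rewrite /mulm.
under eq_bigr do rewrite mulr_suml.
rewrite exchange_big; apply: eq_bigr => u _.
by rewrite mulr_sumr; apply: eq_bigr => v _; rewrite mulrA.
Qed.

Lemma prodm_cons x s :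
  (0 < size s)%N -> prodm (x :: s) = mulm (pcols x.1) x.2 (prodm s).
Proof. by case: s => // y s _; case: x. Qed.

Lemma prodm_merge L Rs p q pq X Y : pcols pq = pcols q ->
  prodm (L ++ (pq, mulm (pcols p) X Y) :: Rs) = prodm (L ++ (p, X) :: (q, Y) :: Rs).
Proof.
move=> cols_eq; elim: L => [|x L IH].
  by case: Rs => [|y Rs] //; rewrite /= cols_eq mulmA.
by rewrite cat_cons !prodm_cons ?size_cat ?addnS // IH.
Qed.

Fixpoint factors s : Prop :=
  if s is (p, X) :: s' then factor p X /\ factors s' else True.

Lemma factors_cat s1 s2 : factors (s1 ++ s2) <-> factors s1 /\ factors s2.
Proof. by elim: s1 => [|[p X] s1 IH] /=; [tauto | rewrite IH; tauto]. Qed.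

Lemma factors_zip b Xs : size Xs = size b ->
  (forall l, (l < size b)%N ->
     factor (nth dflt_pattern b l) (nth (fun _ _ => 0) Xs l)) ->
  factors (zip b Xs).
Proof.
elim: b Xs => [|p b IH] [|X Xs] //= [size_eq] FXs; split; first exact: (FXs 0%N).
by apply: IH => // l; apply: (FXs l.+1).
Qed.

Lemma factors_nth s l : factors s -> (l < size s)%N ->
  factor (nth dflt_pattern (map fst s) l) (nth (fun _ _ => 0) (map snd s) l).
Proof. by elim: s l => [|[p X] s IH] // [|l] [FX Fs] //= /IH; apply. Qed.

Lemma BsetP b M : Bset b M <-> exists s, [/\ map fst s = b, factors s & M = prodm s].
Proof.
split=> [[Xs [size_eq FXs ->]]|[s [<- Fs ->]]].
  exists (zip b Xs); split => //; last exact: factors_zip.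
  by rewrite -/(unzip1 _) unzip1_zip // size_eq.
exists (map snd s); rewrite !size_map zip_unzip; split => // l.
exact: factors_nth.
Qed.

Lemma Bset_merge L Rs p q pq :
  pcols pq = pcols q ->
  (forall X Y : mat R, factor p X -> factor q Y -> factor pq (mulm (pcols p) X Y)) ->
  (forall Z : mat R, factor pq Z ->
     exists X Y, [/\ factor p X, factor q Y & Z = mulm (pcols p) X Y]) ->
  forall M : mat R, Bset (L ++ pq :: Rs) M <-> Bset (L ++ p :: q :: Rs) M.
Proof.
move=> cols_eq mul_closed decomp M; rewrite !BsetP; split=> -[s [s_fst Fs ->]].
  have [s1 [[pq' Z] [s2 [es e1 /= e e2]]]] := map_eq_cat_cons s_fst; subst s pq'.
  case/factors_cat: Fs => F1 /= [/decomp[X [Y [PX QY ->]]] F2].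
  exists (s1 ++ (p, X) :: (q, Y) :: s2); split.
  - by rewrite map_cat e1 /= e2.
  - by apply/factors_cat.
  - by apply: prodm_merge.
have [s1 [[p' X] [[|[q' Y] s2] [es e1 /= e //= [e' e2]]]]] := map_eq_cat_cons s_fst.
subst s p' q'; case/factors_cat: Fs => F1 /= [PX [QY F2]].
exists (s1 ++ (pq, mulm (pcols p) X Y) :: s2); split.
- by rewrite map_cat e1 /= e2.
- by apply/factors_cat; split => //=; split => //; apply: mul_closed.
- by symmetry; apply: prodm_merge.
Qed.

End Products.

Lemma rr_stepP b b' : rr_step b b' ->
  exists L p q Rs, [/\ b = L ++ p :: q :: Rs, redundant_pair p q &
                        b' = L ++ pstar p q :: Rs].
Proof.
case=> _ [l [lt_l [red ->]]].
exists (take l b), (nth dflt_pattern b l), (nth dflt_pattern b l.+1), (drop l.+2 b).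
split => //; rewrite -{1}(cat_take_drop l b) (drop_nth dflt_pattern (ltnW lt_l)).
by rewrite (drop_nth dflt_pattern lt_l).
Qed.

Lemma rr_step_size b b' : rr_step b b' -> size b' < size b.
Proof. by case/rr_stepP=> L [p [q [Rs [-> _ ->]]]]; rewrite !size_cat ltn_add2l. Qed.

Lemma rr_step_acc b : Acc (fun b2 b1 => rr_step b1 b2) b.
Proof.
have [n] := ubnP (size b); elim: n b => [//|n IH] b lt_bn.
constructor => b' /rr_step_size lt_b'b; apply: IH.
exact: leq_trans lt_b'b (ltnSE lt_bn).
Qed.

Lemma norm0_merge L Rs p q :
  pattern_pos p -> pattern_pos q -> redundant_pair p q ->
  norm0 (L ++ pstar p q :: Rs) <= norm0 (L ++ p :: q :: Rs).
Proof.
move=> pp pq /(pweight_pstar pp pq); rewrite /norm0 /pweight !big_cat !big_cons /=; lia.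
Qed.

Lemma chainable_merge L Rs p q : chainable_pair p q ->
  chainable (L ++ p :: q :: Rs) -> chainable (L ++ pstar p q :: Rs).
Proof.
move=> pq; apply: sorted_merge_pair => w.
  exact: chainable_pair_pstarr.
exact: chainable_pair_pstarl.
Qed.

Definition block_product (beta b : seq pattern) : Prop :=
  exists RS : seq (seq pattern),
    [/\ all (fun u => 0 < size u) RS, flatten RS = beta & b = map iprod RS].

Lemma block_product_refl beta : block_product beta beta.
Proof.
exists (map (fun x => [:: x]) beta); split.
- by elim: beta.
- by elim: beta => //= x beta ->.
- by elim: beta => //= x beta {1}->.
Qed.

Lemma block_product_merge beta L p q Rs : sorted pattern_dvd beta ->
  block_product beta (L ++ p :: q :: Rs) -> block_product beta (L ++ pstar p q :: Rs).
Proof.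
move=> sorted_beta [RS [RS_ne RS_beta /esym eb]].
have [RL [u [[|v RR] [eRS eL eu //= [ev eR]]]]] := map_eq_cat_cons eb; subst RS.
have uv_sorted : sorted pattern_dvd (u ++ v).
  move: sorted_beta; rewrite -RS_beta flatten_cat /= => /cat_sorted2[_].
  by rewrite catA => /cat_sorted2[].
move: RS_ne; rewrite all_cat /= => /and4P[neL ne_u ne_v neR].
exists (RL ++ (u ++ v) :: RR); split.
- by rewrite all_cat /= neL neR size_cat addn_gt0 ne_u.
- by rewrite -RS_beta !flatten_cat /= -catA.
- by rewrite map_cat /= eL eR iprod_cat // eu ev.
Qed.

Lemma block_productP beta b : block_product beta b ->
  exists ns : seq nat, [/\ all (fun n => 0 < n) ns, sumn ns = size beta &
                          b = map iprod (reshape ns beta)].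
Proof.
case=> RS [RS_ne <- ->]; exists (shape RS); split.
- by rewrite all_map.
- by rewrite size_flatten.
- by rewrite flattenK.
Qed.

Definition rr_invariant (R : realType) (beta b : seq pattern) : Prop :=
  [/\ all pattern_pos b, chainable b, block_product beta b,
      forall M : mat R, Bset b M <-> Bset beta M & norm0 b <= norm0 beta].

Lemma rr_invariant_step (R : realType) beta b b' : sorted pattern_dvd beta ->
  rr_invariant R beta b -> rr_step b b' -> rr_invariant R beta b'.
Proof.
move=> sorted_beta [pos ch blocks B N] /rr_stepP[L [p [q [Rs [eb red ->]]]]].
subst b.
have pq_ch : chainable_pair p q by case/andP: red.
move: pos; rewrite all_cat /= => /and4P[posL pp pq posR].
split.
- by rewrite all_cat /= posL posR pattern_pos_pstar.
- exact: chainable_merge.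
- exact: block_product_merge.
- move=> M; rewrite -B; apply: Bset_merge => [|X Y|Z].
  + exact: pcols_pstar.
  + exact: factor_pstar.
  + exact: factor_pstar_decomp.
- exact: leq_trans (norm0_merge L Rs pp pq red) N.
Qed.

Theorem proposition4p15 (R : realType) (beta : seq pattern) :
  architecture beta -> chainable beta ->
  (* the procedure stops after finitely many iterations, whatever choices are made *)
  Acc (fun b2 b1 => rr_step b1 b2) beta /\
  (* every possible output beta' satisfies (1), (2), (3) *)
  (forall beta', rr_reach beta beta' -> ~~ redundant beta' ->
     [/\ (chainable beta' && ~~ redundant beta' /\
          exists ns : seq nat,
            [/\ all (fun n => 0 < n) ns, sumn ns = size beta &
                beta' = map iprod (reshape ns beta)]),
         (forall M : mat R, Bset beta' M <-> Bset beta M) &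
         norm0 beta' <= norm0 beta]).
Proof.
case/and3P=> _ pos _ ch; split; first exact: rr_step_acc.
move=> beta' reach not_red.
have sorted_beta : sorted pattern_dvd beta := sub_sorted chainable_pair_dvd ch.
have [_ ch' /block_productP blocks B N] : rr_invariant R beta beta'.
  elim: reach => [|b1 b2 _ IH]; last exact: rr_invariant_step.
  by split => //; exact: block_product_refl.
by split => //; rewrite ch' not_red.
Qed.
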